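(* Let $G$ be an always solvable graph with $n\ge 1$ vertices. Then there exists a chain of always solvable subgraphs $G=G_0\supset G_1\supset\cdots\supset G_{n-1}=K_1$, where for each $k$, $G_k$ is obtained from $G_{k-1}$ by deleting a single vertex (together with its incident edges).
   Context: For a finite simple graph $G$ with vertex set $\{v_1,\dots,v_n\}$, the closed adjacency matrix $N(G)$ is the $n\times n$ matrix over $\mathbb{Z}_2$ whose $(i,j)$ entry is $1$ iff $i=j$ or $v_i$ is adjacent to $v_j$. The nullity of $G$ is $\nu(G):=\dim\operatorname{Ker}(N(G))$ over $\mathbb{Z}_2$. $G$ is called always solvable if $\nu(G)=0$, equivalently if for every $\mathbf{c}\in\mathbb{Z}_2^{V(G)}$ there is $\mathbf{p}$ with $N(G)\mathbf{p}=\mathbf{c}$ (Lights Out game: every configuration can be turned off). *)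

From mathcomp Require Import all_boot all_algebra.
Set Implicit Arguments. Unset Strict Implicit. Unset Printing Implicit Defensive.
Import GRing.Theory.
Local Open Scope ring_scope.

(* Subgraphs obtained by deleting vertices are the induced subgraphs on
   vertex subsets S : {set T}; vertices of S are numbered v_1..v_|S| via
   enum_val. *)

Definition simple_graph (T : finType) (e : rel T) : Prop :=
  symmetric e /\ irreflexive e.

Definition closed_adj (T : finType) (e : rel T) (S : {set T}) : 'M['F_2]_#|S| :=
  \matrix_(i, j) (if (enum_val i == enum_val j) || e (enum_val i) (enum_val j)
                  then 1 else 0).

(* nullity = dim Ker N over Z_2: cokermx N spans {v | N *m v = 0}. *)
Definition nullity (T : finType) (e : rel T) (S : {set T}) : nat :=
  \rank (cokermx (closed_adj e S)).

Definition always_solvable (T : finType) (e : rel T) (S : {set T}) : Prop :=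
  nullity e S = 0%N.

(* The closed adjacency matrix N of an always solvable graph is symmetric and
   invertible over Z_2 with an all-ones diagonal.  Its inverse is symmetric
   too, and cannot have a zero diagonal: a symmetric matrix with zero diagonal
   in characteristic 2 is alternating, whereas z = N e_k gives
   z^T N^-1 z = N_kk = 1.  By Jacobi's identity the principal submatrix
   obtained by deleting vertex k is invertible whenever (N^-1)_kk <> 0, so some
   vertex can always be deleted keeping the graph always solvable; repeating
   this down to a single vertex yields the chain. *)
From mathcomp Require Import all_boot all_algebra.
Set Implicit Arguments. Unset Strict Implicit. Unset Printing Implicit Defensive.
Import GRing.Theory.
Local Open Scope ring_scope.

Lemma hollow_sym_quad_form_pchar2 (R : comNzRingType) (n : nat) (B : 'M[R]_n)
    (z : 'cV[R]_n) :
  2 \in [pchar R] -> B^T = B -> (forall i, B i i = 0) -> z^T *m B *m z = 0.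
Proof.
move=> pcharR2 symB B_diag.
pose L := \matrix_(i, j) (if (j < i)%N then B i j else 0) : 'M[R]_n.
have B_split : B = L + L^T.
  apply/matrixP => i j; rewrite !mxE.
  case: (ltngtP i j) => [ij|ji|/val_inj->]; rewrite ?add0r ?addr0 ?B_diag //.
  by rewrite -[in LHS]symB mxE.
set M := z^T *m L *m z.
have trM : M^T = M by apply/matrixP => i j; rewrite !ord1 mxE.
have -> : z^T *m B *m z = M + M^T.
  by rewrite B_split mulmxDr mulmxDl /M !trmx_mul trmxK !mulmxA.
by rewrite trM; apply/matrixP => i j; rewrite !mxE addrr_pchar2.
Qed.

Lemma exists_invmx_diag_neq0 (F : fieldType) (n : nat) (A : 'M[F]_n) (k0 : 'I_n) :
  2 \in [pchar F] -> A^T = A -> (forall i, A i i = 1) -> A \in unitmx ->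
  exists k, invmx A k k != 0.
Proof.
move=> pcharF2 symA A_diag A_unit.
apply/existsP; apply: contraT; rewrite negb_exists => /forallP Ainv_diag.
have symB : (invmx A)^T = invmx A by rewrite trmx_inv symA.
pose z := A *m delta_mx k0 (0 : 'I_1).
have : z^T *m invmx A *m z = 1.
  rewrite /z trmx_mul symA -!mulmxA (mulmxA (invmx A)) mulVmx // mul1mx.
  by rewrite trmx_delta -rowE -colE; apply/matrixP => i j; rewrite !ord1 !mxE A_diag.
rewrite hollow_sym_quad_form_pchar2 // => [/matrixP/(_ 0 0)|i].
  by rewrite !mxE => /eqP; rewrite eq_sym oner_eq0.
exact/eqP/negPn/Ainv_diag.
Qed.

(* Jacobi's identity on complementary minors, in the one-index case. *)
Lemma row_free_mxsub_invmx (F : fieldType) (m n : nat) (A : 'M[F]_n)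
    (f : 'I_m -> 'I_n) (k : 'I_n) :
  injective f -> (forall j, (j \in codom f) = (j != k)) ->
  A \in unitmx -> invmx A k k != 0 -> row_free (mxsub f f A).
Proof.
move=> f_inj im_f A_unit Akk_neq0.
pose P := rowsub f 1%:M : 'M[F]_(m, n).
have P_free : row_free P.
  apply/row_freeP; exists P^T.
  rewrite /P trmx_mxsub trmx1 -mxsub_mul mul1mx.
  by apply/matrixP => i j; rewrite !mxE (inj_eq f_inj).
apply: inj_row_free => v vA0.
pose u := v *m P.
have uk0 : u 0 k = 0.
  rewrite mxE big1 // => i _; rewrite !mxE.
  by have := codom_f f i; rewrite im_f => /negPf->; rewrite mulr0.
have uA_off j : j != k -> (u *m A) 0 j = 0.
  rewrite -im_f => /codomP[i ->].
  move: vA0; have -> : mxsub f f A = colsub f (rowsub f A).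
    by apply/matrixP => ? ?; rewrite !mxE.
  rewrite mulmx_colsub => /matrixP/(_ 0 i).
  by rewrite mxE [RHS]mxE /u /P -mulmxA -rowsubE.
set c := (u *m A) 0 k.
have u_eq : u = c *: (delta_mx 0 k *m invmx A).
  rewrite scalemxAl -[u](mulmxK A_unit); congr (_ *m _).
  apply/rowP => j; rewrite [RHS]mxE [delta_mx _ _ _ _]mxE.
  by case: (eqVneq j k) => [->|/uA_off->]; rewrite ?eqxx ?mulr1 ?mulr0.
have c0 : c = 0.
  move: uk0; rewrite {1}u_eq -rowE !mxE => /eqP.
  by rewrite mulf_eq0 (negPf Akk_neq0) orbF => /eqP.
apply: (row_free_inj P_free); rewrite mul0mx.
by rewrite -/u u_eq c0 scale0r.
Qed.

Section ClosedAdjacency.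
Variables (T : finType) (e : rel T).

Lemma always_solvable_unitmx (S : {set T}) :
  always_solvable e S <-> closed_adj e S \in unitmx.
Proof.
rewrite /always_solvable /nullity mxrank_coker -row_free_unit /row_free.
rewrite eqn_leq rank_leq_col -subn_eq0.
by split => [->|/eqP].
Qed.

Lemma tr_closed_adj (S : {set T}) : symmetric e -> (closed_adj e S)^T = closed_adj e S.
Proof. by move=> symE; apply/matrixP => i j; rewrite !mxE eq_sym symE. Qed.

Lemma closed_adj_diag (S : {set T}) (i : 'I_#|S|) : closed_adj e S i i = 1.
Proof. by rewrite mxE eqxx. Qed.

Lemma closed_adj_subset (S S' : {set T}) (x0 : T) (x0S : x0 \in S) :
  S' \subset S ->
  closed_adj e S' = mxsub (enum_rank_in x0S \o enum_val)
                          (enum_rank_in x0S \o enum_val) (closed_adj e S).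
Proof.
move=> sS'S; apply/matrixP => i j.
by rewrite !mxE !enum_rankK_in // (subsetP sS'S) // enum_valP.
Qed.

Lemma always_solvable_setD1 (S : {set T}) (k : 'I_#|S|) :
  always_solvable e S -> invmx (closed_adj e S) k k != 0 ->
  always_solvable e (S :\ enum_val k).
Proof.
move=> /always_solvable_unitmx S_unit Skk_neq0.
apply/always_solvable_unitmx; rewrite -row_free_unit.
rewrite (closed_adj_subset (enum_valP k) (subsetDl _ _)).
set f := (_ \o _).
have f_val i : enum_val (f i) = enum_val i.
  by rewrite /= enum_rankK_in //; apply: (subsetP (subsetDl _ _)); exact: enum_valP.
apply: row_free_mxsub_invmx Skk_neq0 => // [i j /(congr1 enum_val)|j].
  by rewrite !f_val => /enum_val_inj.
apply/codomP/idP => [[i ->]|j_neq_k].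
  by have := enum_valP i; rewrite -f_val in_setD1 (inj_eq enum_val_inj) => /andP[].
have jS' : enum_val j \in S :\ enum_val k.
  by rewrite in_setD1 (inj_eq enum_val_inj) j_neq_k enum_valP.
by exists (enum_rank_in jS' (enum_val j)); apply: enum_val_inj; rewrite f_val enum_rankK_in.
Qed.

Lemma exists_always_solvable_setD1 (S : {set T}) :
  symmetric e -> (0 < #|S|)%N -> always_solvable e S ->
  exists2 v, v \in S & always_solvable e (S :\ v).
Proof.
move=> symE S_gt0 S_solvable.
have [k Skk_neq0] := exists_invmx_diag_neq0 (Ordinal S_gt0) (@pchar_Fp 2 isT)
  (tr_closed_adj S symE) (@closed_adj_diag S)
  (iffLR (always_solvable_unitmx S) S_solvable).
by exists (enum_val k); [exact: enum_valP | exact: always_solvable_setD1].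
Qed.

Lemma always_solvable_deletion_chain (n : nat) (S : {set T}) :
  symmetric e -> #|S| = n.+1 -> always_solvable e S ->
  exists G : nat -> {set T},
    [/\ G 0%N = S,
        (forall k : nat, (0 < k <= n)%N ->
           exists2 v, v \in G k.-1 & G k = G k.-1 :\ v),
        (forall k : nat, (k <= n)%N -> always_solvable e (G k))
      & #|G n| = 1%N].
Proof.
move=> symE; elim: n S => [|n IHn] S cardS S_solvable.
  by exists (fun=> S); split=> // [[|k]].
have S_gt0 : (0 < #|S|)%N by rewrite cardS.
have [v vS Sv_solvable] := exists_always_solvable_setD1 symE S_gt0 S_solvable.
have cardSv : #|S :\ v| = n.+1 by move: (cardsD1 v S); rewrite vS cardS => -[].
have [G [G0 G_step G_solvable G_card]] := IHn _ cardSv Sv_solvable.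
exists (fun k => if k is k'.+1 then G k' else S); split=> // [[|[|k]]|[|k]] //=.
- by move=> _; exists v; rewrite ?G0.
- by move=> ?; apply: (G_step k.+1).
- by move=> ?; apply: G_solvable.
Qed.

End ClosedAdjacency.

Theorem corollary2p9 (T : finType) (e : rel T) :
  simple_graph e -> (0 < #|T|)%N -> always_solvable e [set: T] ->
  exists G : nat -> {set T},
    [/\ G 0%N = [set: T],
        (forall k : nat, (0 < k < #|T|)%N ->
           exists2 v, v \in G k.-1 & G k = G k.-1 :\ v),
        (forall k : nat, (k < #|T|)%N -> always_solvable e (G k))
      & #|G (#|T|.-1)| = 1%N].
Proof.
move=> [symE _] T_gt0 T_solvable.
have cardT : #|[set: T]| = (#|T|.-1).+1 by rewrite cardsT prednK.
have [G [G0 G_step G_solvable G_card]] :=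
  always_solvable_deletion_chain symE cardT T_solvable.
by exists G; split=> // k; rewrite -[#|T|](prednK T_gt0) ltnS;
  [apply: G_step | apply: G_solvable].
Qed.
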